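(* Let $F$ be a semi-flow on a connected metrizable space $X$. Then $\mathcal{NW}_F$ is forward-invariant under the induced action $F^t(x,y)=(F^t(x),F^t(y))$ on $X\times X$. Moreover, for every $x\in X$: (1) $\mathrm{Down}_{\mathcal{NW}_F}(x)$ is forward-invariant under $F$; (2) $\mathrm{Down}_{\mathcal{NW}_F}(x)\supset\mathcal{O}_F(x)\cup\Omega_F(x)$; (3) if $\Omega_F(x)\neq\emptyset$, then $\mathcal{O}_F(x)\cup\mathrm{Down}_{\mathcal{NW}_F}(\Omega_F(x))\supset\mathrm{Down}_{\mathcal{NW}_F}(x)$; (4) $\mathcal{O}_F(x)\cup\mathrm{Down}_{\mathcal{NW}_F}(y)\supset\mathrm{Down}_{\mathcal{NW}_F}(x)$ for all $y\in\mathcal{O}_F(x)$; (5) if $F^t$ is an open map for every $t\ge0$, then $\mathrm{Down}_{\mathcal{NW}_F}(x)=\mathcal{O}_F(x)\cup\mathrm{Down}_{\mathcal{NW}_F}(y)$ for all $y\in\mathcal{O}_F(x)$.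
   Context: A semi-flow on $X$ is a continuous map $F:\mathbb{T}\times X\to X$, $(t,x)\mapsto F^t(x)$, where $\mathbb{T}=\{0,1,2,\dots\}$ or $[0,\infty)$, with $F^0=\mathrm{id}$ and $F^{t_1+t_2}=F^{t_2}\circ F^{t_1}$. Put $\mathcal{O}_F(x)=\{F^t(x):t\in\mathbb{T}\}$ and $\mathcal{O}_F=\{(x,y):y\in\mathcal{O}_F(x)\}$. $\Omega_F(x)$ is the set of $y$ with $F^{t_n}(x)\to y$ for some $t_n\to\infty$. The non-wandering relation $\mathcal{NW}_F$ is the closure of $\mathcal{O}_F$ in $X\times X$. For a relation $D$, $\mathrm{Down}_D(x)=\{y:(x,y)\in D\}$ and $\mathrm{Down}_D(M)=\bigcup_{x\in M}\mathrm{Down}_D(x)$. A set $A$ is forward-invariant under $F$ if $F^t(A)\subset A$ for all $t$. *)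

From HB Require Import structures.
From mathcomp Require Import all_boot all_order all_algebra.
From mathcomp Require Import all_classical all_reals all_analysis.
Set Implicit Arguments. Unset Strict Implicit. Unset Printing Implicit Defensive.
Import Order.TTheory GRing.Theory Num.Theory.
Import numFieldNormedType.Exports.
Local Open Scope classical_set_scope.
Local Open Scope ring_scope.

Section SemiFlow.
Variables (R : realType).

(* The time set: disc = true gives {0,1,2,...}, disc = false gives [0,oo),
   both viewed as subsets of R (with the subspace topology). *)
Definition Tset (disc : bool) : set R :=
  if disc then [set t | exists n : nat, t = n%:R] else [set t | 0 <= t].

Variable X : topologicalType.

(* F : T x X -> X is a semi-flow (F t is only meaningful for t in Tset) *)
Definition semiflow (disc : bool) (F : R -> X -> X) : Prop :=
  [/\ {within Tset disc `*` [set: X], continuous (fun p : R * X => F p.1 p.2)},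
      (forall x, F 0 x = x) &
      (forall t1 t2, Tset disc t1 -> Tset disc t2 ->
         forall x, F (t1 + t2) x = F t2 (F t1 x))].

Definition sf_orbit (disc : bool) (F : R -> X -> X) (x : X) : set X :=
  [set F t x | t in Tset disc].

Definition sf_orbit_rel (disc : bool) (F : R -> X -> X) : set (X * X) :=
  [set p | sf_orbit disc F p.1 p.2].

Definition sf_omega (disc : bool) (F : R -> X -> X) (x : X) : set X :=
  [set y | exists t : nat -> R,
     (forall n, Tset disc (t n)) /\ t @ \oo --> +oo /\
     (fun n => F (t n) x) @ \oo --> y].

Definition sf_NW (disc : bool) (F : R -> X -> X) : set (X * X) :=
  closure (sf_orbit_rel disc F).

Definition sf_Down (D : set (X * X)) (x : X) : set X := [set y | D (x, y)].

Definition sf_DownS (D : set (X * X)) (M : set X) : set X :=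
  \bigcup_(x in M) sf_Down D x.

Definition forward_invariant (disc : bool) (F : R -> X -> X) (A : set X) :=
  forall t, Tset disc t -> F t @` A `<=` A.

Definition forward_invariant2 (disc : bool) (F : R -> X -> X) (A : set (X * X)) :=
  forall t, Tset disc t -> (fun p : X * X => (F t p.1, F t p.2)) @` A `<=` A.

Definition open_map (f : X -> X) := forall U : set X, open U -> open (f @` U).

End SemiFlow.

From HB Require Import structures.
From mathcomp Require Import all_boot all_order all_algebra.
From mathcomp Require Import all_classical all_reals all_analysis.
Import Order.TTheory GRing.Theory Num.Theory.
Import numFieldNormedType.Exports.
Local Open Scope classical_set_scope.
Local Open Scope ring_scope.

(* For a compact set K of times, the relation {(a, F^s a) | s in K} is closed:
   a limit (x, y) of such pairs has times clustering at some s in K, and joint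
   continuity of the semi-flow together with the Hausdorff property give
   y = F^s x.  Hence a pair (x, y) of the non-wandering relation with y outside
   the orbit of x is approximated by orbit pairs with arbitrarily late times,
   and this is what allows x to be replaced by F^r x or by a point of its
   omega-limit set in (3) and (4).  All other assertions follow from the
   continuity (or openness) of the maps F^t alone. *)

Lemma closure_prodP (T U : topologicalType) (S : set (T * U)) (a : T) (b : U) :
  closure S (a, b) <-> forall P Q, nbhs a P -> nbhs b Q -> S `&` P `*` Q !=set0.
Proof.
split=> [clS P Q nP nQ | SPQ W [[P Q] /= [nP nQ] PQW]].
  by apply: clS; exists (P, Q).
by have [p [Sp PQp]] := SPQ P Q nP nQ; exists p; split => //; apply: PQW.
Qed.

Section TimeSets.
Context {R : realType}.
Implicit Types (s t : R) (disc : bool).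

Lemma Tset_add disc s t : Tset disc s -> Tset disc t -> Tset disc (s + t).
Proof.
case: disc => /=; last by move=> ? ?; rewrite addr_ge0.
by move=> [m ->] [n ->]; exists (m + n)%N; rewrite natrD.
Qed.

Lemma Tset_sub disc s t : Tset disc s -> Tset disc t -> t <= s -> Tset disc (s - t).
Proof.
case: disc => /=; last by move=> ? ? ?; rewrite subr_ge0.
by move=> [m ->] [n ->]; rewrite ler_nat => nm; exists (m - n)%N; rewrite natrB.
Qed.

Definition Tset_upto disc (N : nat) : set R :=
  if disc then (fun n : nat => n%:R) @` `I_N else [set` `[0, N%:R]].

Lemma compact_Tset_upto disc N : compact (Tset_upto disc N).
Proof.
rewrite /Tset_upto; case: disc; last exact: segment_compact.
exact/finite_compact/finite_image/finite_II.
Qed.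

Lemma Tset_upto_sub disc N : Tset_upto disc N `<=` Tset disc.
Proof.
rewrite /Tset_upto; case: disc => s /=; first by move=> [m _ <-]; exists m.
by rewrite in_itv /= => /andP[].
Qed.

Lemma Tset_upto_lt disc N s : Tset disc s -> s < N%:R -> Tset_upto disc N s.
Proof.
rewrite /Tset_upto; case: disc => /=.
  by move=> [m ->]; rewrite ltr_nat => mN; exists m.
by move=> s0 sN; rewrite in_itv /= s0 (ltW sN).
Qed.

End TimeSets.

Section NonWandering.
Context {R : realType} {X : topologicalType} {disc : bool} {F : R -> X -> X}.
Hypothesis sfF : semiflow disc F.

Local Notation NW := (sf_NW disc F).
Local Notation Down := (sf_Down NW).
Local Notation orbit := (sf_orbit disc F).

(* For K = Tset disc this is sf_orbit_rel disc F, up to conversion. *)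
Definition sf_orbit_rel_on (K : set R) : set (X * X) :=
  [set p | exists2 s, K s & F s p.1 = p.2].

Lemma closure_orbit_rel_onP K a b :
  closure (sf_orbit_rel_on K) (a, b) <->
  forall P Q, nbhs a P -> nbhs b Q -> exists2 s, K s & exists2 a', P a' & Q (F s a').
Proof.
split=> [/closure_prodP clS P Q nP nQ | H].
  by have [[a' b'] [[s Ks /= <-] [Pa Qb]]] := clS P Q nP nQ; exists s => //; exists a'.
apply/closure_prodP => P Q nP nQ; have [s Ks [a' Pa Qb]] := H P Q nP nQ.
by exists (a', F s a'); split => //; exists s.
Qed.

Lemma sf_NWP a b :
  NW (a, b) <->
  forall P Q, nbhs a P -> nbhs b Q -> exists2 s, Tset disc s & exists2 a', P a' & Q (F s a').
Proof. exact: closure_orbit_rel_onP. Qed.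

Lemma sf_flowE s t x : Tset disc s -> Tset disc t -> F (s + t) x = F t (F s x).
Proof. by move=> Ts Tt; case: sfF => _ _ ->. Qed.

Lemma sf_jointly_continuous {t x U} : Tset disc t -> nbhs (F t x) U ->
  exists P Q, [/\ nbhs t P, nbhs x Q &
    forall s y, Tset disc s -> P s -> Q y -> U (F s y)].
Proof.
case: sfF => cF _ _ Tt nU.
have [[P Q] /= [nP nQ] PQU] := (subspace_continuousP _ _).1 cF (t, x) (conj Tt I) _ nU.
by exists P, Q; split => // s y Ts Ps Qy; apply: (PQU (s, y)).
Qed.

Lemma sf_continuous_nbhs {t x U} : Tset disc t -> nbhs (F t x) U -> nbhs x (F t @^-1` U).
Proof.
move=> Tt nU; have [P [Q [nP nQ PQU]]] := sf_jointly_continuous Tt nU.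
by apply: filterS nQ => y Qy; apply: PQU => //; apply: nbhs_singleton.
Qed.

Lemma closed_orbit_rel_on K : hausdorff_space X ->
  compact K -> K `<=` Tset disc -> closed (sf_orbit_rel_on K).
Proof.
move=> hX cK KT [x y] /closure_orbit_rel_onP clxy.
pose D := [set PQ : set X * set X | nbhs x PQ.1 /\ nbhs y PQ.2].
pose B (PQ : set X * set X) := [set s | K s /\ exists2 a, PQ.1 a & PQ.2 (F s a)].
have times_filter : ProperFilter (filter_from D B).
  apply: filter_from_proper => [|[P Q] [nP nQ]].
    apply: filter_from_filter; first by exists (setT, setT); split; apply: filterT.
    move=> [P Q] [P' Q'] [nP nQ] [nP' nQ']; exists (P `&` P', Q `&` Q').
      by split; apply: filterI.
    by move=> s [Ks [a [Pa P'a] [Qb Q'b]]]; split; split => //; exists a.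
  by have [s Ks [a Pa Qb]] := clxy P Q nP nQ; exists s; split => //; exists a.
have [|s [Ks s_cluster]] := cK _ times_filter.
  by exists (setT, setT); [split; apply: filterT | move=> s []].
exists s => //; apply: hX => U V nU nV.
have [P [Q [nP nQ PQU]]] := sf_jointly_continuous (KT s Ks) nU.
have [|s' [[Ks' [a Qa Va]] Ps']] := s_cluster (B (Q, V)) P _ nP.
  by exists (Q, V).
by exists (F s' a); split => //; apply: PQU => //; apply: KT.
Qed.

Lemma sf_NW_late_returns x y (N : nat) : hausdorff_space X ->
  NW (x, y) -> ~ orbit x y ->
  closure (sf_orbit_rel_on (Tset disc `&` [set s | N%:R <= s])) (x, y).
Proof.
move=> hX NWxy Oxy.
have split_times : sf_orbit_rel disc F `<=`
    sf_orbit_rel_on (Tset_upto disc N) `|` sf_orbit_rel_on (Tset disc `&` [set s | N%:R <= s]).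
  move=> [a b] [s Ts /= <-]; have [sN|Ns] := ltP s N%:R.
    by left; exists s => //; apply: Tset_upto_lt.
  by right; exists s.
have := closureS split_times NWxy; rewrite closureU => -[|//].
rewrite -(closure_id _).1; last first.
  exact: closed_orbit_rel_on hX (compact_Tset_upto _ _) (Tset_upto_sub _ _).
by move=> [s /Tset_upto_sub Ts Fx]; case: Oxy; exists s.
Qed.

Lemma sf_NW_shift {x y r} : hausdorff_space X ->
  NW (x, y) -> ~ orbit x y -> Tset disc r -> NW (F r x, y).
Proof.
move=> hX NWxy Oxy Tr; apply/sf_NWP => P Q nP nQ.
have /closure_orbit_rel_onP late := sf_NW_late_returns x y (Num.truncn r).+1 hX NWxy Oxy.
have [s [Ts Ns] [a Pa Qb]] := late _ _ (sf_continuous_nbhs Tr nP) nQ.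
have rs : r <= s by apply: le_trans Ns; apply/ltW/truncnS_gt.
exists (s - r); first exact: Tset_sub.
by exists (F r a) => //; rewrite -sf_flowE ?subrKC //; apply: Tset_sub.
Qed.

Lemma sf_NW_forward_invariant2 : forward_invariant2 disc F NW.
Proof.
move=> t Tt _ [[a b] NWab <-]; apply/sf_NWP => P Q nP nQ /=.
have [s Ts [a' Pa Qb]] := (sf_NWP a b).1 NWab _ _ (sf_continuous_nbhs Tt nP) (sf_continuous_nbhs Tt nQ).
by exists s => //; exists (F t a') => //; rewrite -sf_flowE // addrC sf_flowE.
Qed.

Lemma sf_Down_forward_invariant x : forward_invariant disc F (Down x).
Proof.
move=> t Tt _ [y NWxy <-]; apply/sf_NWP => P Q nP nQ.
have [s Ts [a Pa Qb]] := (sf_NWP x y).1 NWxy _ _ nP (sf_continuous_nbhs Tt nQ).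
by exists (s + t); [apply: Tset_add | exists a; rewrite ?sf_flowE].
Qed.

Lemma sf_orbit_sub_Down x : orbit x `<=` Down x.
Proof. by move=> y Oxy; apply: subset_closure. Qed.

Lemma sf_omega_sub_Down x : sf_omega disc F x `<=` Down x.
Proof.
move=> y [t [Tt [_ Ftx_y]]]; apply/sf_NWP => P Q nP nQ.
have [N _ FtxQ] := Ftx_y Q nQ.
by exists (t N) => //; exists x; [apply: nbhs_singleton | apply: (FtxQ N (leqnn N))].
Qed.

Lemma sf_Down_sub_orbit_Down x y : hausdorff_space X ->
  orbit x y -> Down x `<=` orbit x `|` Down y.
Proof.
move=> hX [r Tr <-] z NWxz.
by have [|Oxz] := pselect (orbit x z); [left | right; apply: sf_NW_shift].
Qed.

Lemma sf_Down_sub_orbit_DownS_omega x : hausdorff_space X ->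
  sf_omega disc F x !=set0 -> Down x `<=` orbit x `|` sf_DownS NW (sf_omega disc F x).
Proof.
move=> hX [w [t [Tt [tinf Ftx_w]]]] z NWxz.
have [Oxz|Oxz] := pselect (orbit x z); [by left | right].
exists w; first by exists t.
apply/sf_NWP => P Q nP nQ.
have [N _ FtxP] := Ftx_w _ (nbhs_interior nP).
have nFtxP : nbhs (F (t N) x) P°.
  by apply: open_nbhs_nbhs; split; [apply: open_interior | apply: (FtxP N (leqnn N))].
have [s Ts [a Pa Qb]] := (sf_NWP _ _).1 (sf_NW_shift hX NWxz Oxz (Tt N)) _ _ nFtxP nQ.
by exists s => //; exists a => //; apply: interior_subset.
Qed.

Lemma sf_open_Down_orbit_sub x y : (forall t, Tset disc t -> open_map (F t)) ->
  orbit x y -> Down y `<=` Down x.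
Proof.
move=> Fopen [r Tr <-] z NWyz; apply/sf_NWP => P Q nP nQ.
have nFP : nbhs (F r x) (F r @` P°).
  apply: open_nbhs_nbhs; split; first by apply: Fopen => //; apply: open_interior.
  by exists x => //; apply: nbhs_singleton (nbhs_interior nP).
have [s Ts [_ [a Pa <-] Qb]] := (sf_NWP _ _).1 NWyz _ _ nFP nQ.
exists (r + s); first exact: Tset_add.
by exists a; [apply: interior_subset | rewrite sf_flowE].
Qed.

End NonWandering.

Theorem proposition10 (R : realType) (X : pseudoMetricType R)
  (disc : bool) (F : R -> X -> X) :
  hausdorff_space X -> connected [set: X] -> semiflow disc F ->
  forward_invariant2 disc F (sf_NW disc F) /\
  (forall x : X,
    forward_invariant disc F (sf_Down (sf_NW disc F) x) /\
    sf_orbit disc F x `|` sf_omega disc F x `<=` sf_Down (sf_NW disc F) x /\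
    (sf_omega disc F x !=set0 ->
       sf_Down (sf_NW disc F) x `<=` sf_orbit disc F x `|` sf_DownS (sf_NW disc F) (sf_omega disc F x)) /\
    (forall y, sf_orbit disc F x y ->
       sf_Down (sf_NW disc F) x `<=` sf_orbit disc F x `|` sf_Down (sf_NW disc F) y) /\
    ((forall t, Tset disc t -> open_map (F t)) ->
       forall y, sf_orbit disc F x y ->
         sf_Down (sf_NW disc F) x = sf_orbit disc F x `|` sf_Down (sf_NW disc F) y)).
Proof.
move=> hX _ sfF; split; first exact: sf_NW_forward_invariant2 sfF.
move=> x; split; first exact: sf_Down_forward_invariant sfF x.
split.
  by rewrite subUset; split; [apply: sf_orbit_sub_Down | apply: sf_omega_sub_Down].
split; first exact: sf_Down_sub_orbit_DownS_omega sfF x hX.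
split=> [y|Fopen y Oxy]; first exact: sf_Down_sub_orbit_Down sfF x y hX.
apply/seteqP; split; first exact: sf_Down_sub_orbit_Down sfF x y hX Oxy.
by rewrite subUset; split; [apply: sf_orbit_sub_Down | apply: sf_open_Down_orbit_sub sfF x y Fopen Oxy].
Qed.
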